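(* Let $k,\ell \in \mathbb{N}$, and let $G$ be an $\ell$-empty ordered graph. If the irreducible block decomposition of $G$ contains a block of order at least $4k\ell$, then $S_n(G) \geqslant F_{n,\ell}$ for each $n \leqslant k$.
   Context: Ordered graphs of order $n$ have vertex set $[n]$ with the natural order. The length of an edge $ij$ is $|i-j|$; $G$ is $\ell$-empty if it has no edges of length at least $\ell$. A pair of vertices $u<v$ separates the edges of $G$ if every edge $ij$ ($i<j$) has $j\leqslant u$ or $v\leqslant i$; $G$ is irreducible if no pair separates its edges. For ordered graphs $G_1,\dots,G_m$, $G_1+\dots+G_m$ places copies of them consecutively from left to right with no edges between copies. Every ordered graph $G$ is uniquely $G=G_1+\dots+G_m$ with each $G_i$ irreducible; this is its irreducible block decomposition. $S_n(G)$ is the number of distinct (non-isomorphic as ordered graphs) induced ordered subgraphs of $G$ of order $n$. $F_{n,\ell}$: $F_{n,\ell}=0$ for $n<0$, $F_{0,\ell}=1$, $F_{n,\ell}=F_{n-1,\ell}+\dots+F_{n-\ell,\ell}$ for $n\geqslant1$. *)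

From mathcomp Require Import all_boot.
Set Implicit Arguments. Unset Strict Implicit. Unset Printing Implicit Defensive.

(* An ordered graph of order N: vertex set {0,...,N-1} (0-based instead of
   the paper's [N] = {1,...,N}; only the order matters), natural order,
   given by a symmetric irreflexive adjacency relation E on nat supported
   on vertices < N. *)
Definition ordered_graph (N : nat) (E : rel nat) : Prop :=
  [/\ forall i j, E i j = E j i,
      forall i, ~~ E i i &
      forall i j, E i j -> i < N].

Definition l_empty (l : nat) (E : rel nat) : Prop :=
  forall i j, E i j -> i < j -> j - i < l.

(* The induced ordered subgraph on A (|A| = n), relabelled increasingly as
   {0,...,n-1}; recorded as its adjacency on 'I_n.  Two ordered graphs of
   order n are isomorphic (as ordered graphs) iff these adjacencies agree,
   since the only order-preserving bijection [n] -> [n] is the identity. *)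
Definition induced (N : nat) (E : rel nat) (n : nat) (A : {set 'I_N})
  : {ffun 'I_n * 'I_n -> bool} :=
  let s := sort leq [seq val x | x <- enum A] in
  [ffun p : 'I_n * 'I_n => E (nth 0 s p.1) (nth 0 s p.2)].

Definition S_n (n N : nat) (E : rel nat) : nat :=
  #|[set induced E n A | A : {set 'I_N} & #|A| == n]|.

Definition irreducible (m : nat) (Eb : rel nat) : Prop :=
  ~ (exists u v, [/\ u < v, v < m &
       forall i j, i < j -> Eb i j -> (j <= u) || (v <= i)]).

Definition block (E : rel nat) (a m : nat) : rel nat :=
  fun i j => [&& i < m, j < m & E (a + i) (a + j)].

Definition block_start (ns : seq nat) (t : nat) : nat := sumn (take t ns).

(* ns is (the list of orders of) the irreducible block decomposition
   G = G_1 + ... + G_m of the ordered graph (N, E): blocks are consecutive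
   intervals of positive orders ns`_0, ..., covering {0..N-1}, there are
   no edges between different blocks, and each block is irreducible. *)
Definition irr_block_decomp (N : nat) (E : rel nat) (ns : seq nat) : Prop :=
  [/\ all (fun m => 0 < m) ns,
      sumn ns = N,
      (forall i j, E i j -> exists2 t, t < size ns &
          [/\ block_start ns t <= i, i < block_start ns t + nth 0 ns t,
              block_start ns t <= j & j < block_start ns t + nth 0 ns t]) &
      (forall t, t < size ns ->
          irreducible (nth 0 ns t) (block E (block_start ns t) (nth 0 ns t)))].

(* F_{n,l}: F_{n,l} = 0 for n < 0, F_{0,l} = 1,
   F_{n,l} = F_{n-1,l} + ... + F_{n-l,l} for n >= 1.
   Fseq l n = [:: F_{n,l}; F_{n-1,l}; ...; F_{0,l}]. *)
Fixpoint Fseq (l n : nat) : seq nat :=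
  match n with
  | 0 => [:: 1]
  | n'.+1 => let s := Fseq l n' in sumn (take l s) :: s
  end.

Definition F (n l : nat) : nat := head 0 (Fseq l n).

From mathcomp Require Import all_boot zify.
From Stdlib Require Import Classical.
Set Implicit Arguments. Unset Strict Implicit. Unset Printing Implicit Defensive.

(* Compositions of n with parts at most l are counted by F_{n,l}, and we map
   them injectively to induced subgraphs of order n.  Inside an irreducible
   block, a set of a <= l vertices inducing an irreducible graph is grown one
   vertex at a time inside a window of width 3l: fill a gap of its hull if
   there is one, and otherwise use an edge of the block crossing the right end
   of the hull, which is shorter than l.  Putting the pieces for the parts of a
   composition into consecutive windows more than l apart, no edge joins two
   pieces, so the positions of the induced subgraph crossed by no edge are
   exactly the partial sums of the composition. *)

(* [nth [::] (composition_table l n) b] lists the compositions of [n - b] with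
   parts in [1, l], so that the table mirrors [Fseq l n]. *)
Fixpoint composition_table (l n : nat) : seq (seq (seq nat)) :=
  match n with
  | 0 => [:: [:: [::]]]
  | n'.+1 => let s := composition_table l n' in
      [seq b.+1 :: c | b <- iota 0 l, c <- nth [::] s b] :: s
  end.

Definition compositions (l n : nat) : seq (seq nat) :=
  head [::] (composition_table l n).

Lemma sumn_take_nth (s : seq nat) (l : nat) :
  sumn (take l s) = sumn [seq nth 0 s b | b <- iota 0 l].
Proof.
elim: s l => [|x s IH] [|l] //=.
- by rewrite add0n; elim: (iota 1 l) => //= ? ? <-; rewrite nth_nil.
- by rewrite IH -(addn0 1) iotaDl -map_comp.
Qed.

Lemma size_composition_table (l n : nat) :
  map size (composition_table l n) = Fseq l n.
Proof.
elim: n => //= n IH; rewrite IH size_allpairs_dep -IH sumn_take_nth.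
congr (sumn _ :: _); apply: eq_map => b.
have [b_lt | b_ge] := ltnP b (size (composition_table l n)).
  by rewrite (nth_map [::]).
by rewrite !nth_default ?size_map.
Qed.

Lemma size_compositions (l n : nat) : size (compositions l n) = F n l.
Proof. by rewrite /F -size_composition_table /compositions; case: n. Qed.

Lemma composition_tableP (l n b : nat) (c : seq nat) :
  c \in nth [::] (composition_table l n) b ->
  sumn c + b = n /\ all (fun a => 0 < a <= l) c.
Proof.
elim: n b c => [|n IH] [|b] c /=.
- by rewrite inE => /eqP ->.
- by rewrite nth_nil.
- case/allpairsPdep => [b' [c' [b'_lt c'_in ->]]].
  have [sum_c' parts_c'] := IH _ _ c'_in; rewrite mem_iota in b'_lt.
  by split; [rewrite /= -sum_c'; lia | rewrite /= parts_c' andbT; lia].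
- by move=> /IH [sum_c parts_c]; split => //; lia.
Qed.

Lemma compositionsP (l n : nat) (c : seq nat) : c \in compositions l n ->
  sumn c = n /\ all (fun a => 0 < a <= l) c.
Proof. by rewrite /compositions -nth0 => /composition_tableP; rewrite addn0. Qed.

Lemma uniq_composition_table (l n b : nat) :
  uniq (nth [::] (composition_table l n) b).
Proof.
elim: n b => [|n IH] [|b] //=; first by rewrite nth_nil.
apply: allpairs_uniq_dep => [|x _|]; [exact: iota_uniq | exact: IH |].
by move=> [x1 y1] [x2 y2] _ _ /= [-> ->].
Qed.

Lemma uniq_compositions (l n : nat) : uniq (compositions l n).
Proof. by rewrite /compositions -nth0 uniq_composition_table. Qed.

Fixpoint psums (c : seq nat) : seq nat :=
  if c is a :: c' then a :: map (addn a) (psums c') else [::].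

Lemma psums_inj : injective psums.
Proof.
elim=> [|a c IH] [|a' c'] //= [<-] /(inj_map (@addnI a)) /IH -> //.
Qed.

Lemma mem_psums_cons (a : nat) (c : seq nat) (p : nat) :
  (p \in psums (a :: c)) = (p == a) || (a <= p) && (p - a \in psums c).
Proof.
rewrite /= inE; congr orb; apply/mapP/idP.
  by move=> [y y_in ->]; rewrite leq_addr /= addKn.
by move=> /andP [a_le y_in]; exists (p - a) => //; rewrite subnKC.
Qed.

Lemma mem_psums (c : seq nat) (z : nat) : all (fun a => 0 < a) c ->
  z \in psums c -> 0 < z <= sumn c.
Proof.
elim: c z => [|a c IH] z //= /andP [a_gt0 c_pos].
rewrite inE => /orP [/eqP -> | /mapP [y /(IH _ c_pos) y_in ->]]; lia.
Qed.

Lemma sorted_psums (c : seq nat) : all (fun a => 0 < a) c -> sorted ltn (psums c).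
Proof.
rewrite (sorted_pairwise ltn_trans).
elim: c => [|a c IH] //= /andP [a_gt0 c_pos]; rewrite pairwise_map.
have -> : pairwise (relpre (addn a) ltn) (psums c) = pairwise ltn (psums c).
  by apply: eq_pairwise => x y /=; rewrite ltn_add2l.
rewrite IH // andbT; apply/allP => z /mapP [y /(mem_psums c_pos) y_in ->]; lia.
Qed.

Lemma size_le_sumn (c : seq nat) : all (fun a => 0 < a) c -> size c <= sumn c.
Proof. by elim: c => //= a c IH /andP [a_gt0 /IH]; lia. Qed.

Definition irreducible_set (E : rel nat) (S : seq nat) : Prop :=
  forall u, has (fun s => s <= u) S -> has (fun w => u < w) S ->
  exists x y, [/\ x \in S, y \in S, x <= u, u < y & E x y].

Definition crossed (E : rel nat) (s : seq nat) (p : nat) : Prop :=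
  exists i j, [/\ i < p, p <= j, j < size s & E (nth 0 s i) (nth 0 s j)].

Lemma ltn_sorted_leq_nth (s : seq nat) (i j : nat) : sorted ltn s ->
  i < size s -> j < size s -> (nth 0 s i <= nth 0 s j) = (i <= j).
Proof.
move=> s_sorted i_lt j_lt; apply/idP/idP => [|ij].
  by apply: contraTT; rewrite -!ltnNge; apply: (sorted_ltn_nth ltn_trans).
case: ltngtP ij => // [ij _ | -> //].
exact/ltnW/(sorted_ltn_nth ltn_trans).
Qed.

Section IrreducibleSets.

Variable E : rel nat.

Lemma eq_irreducible_set (S S' : seq nat) :
  S =i S' -> irreducible_set E S -> irreducible_set E S'.
Proof.
move=> eqS irrS u; rewrite -!(eq_has_r eqS) => /irrS /[apply].
by move=> [x [y [x_in y_in]]]; exists x, y; rewrite -!eqS.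
Qed.

Lemma irreducible_set1 (x : nat) : irreducible_set E [:: x].
Proof. by move=> u /=; rewrite !orbF => x_le; rewrite ltnNge x_le. Qed.

Lemma irreducible_set_edge (x y : nat) : x < y -> E x y -> irreducible_set E [:: x; y].
Proof.
move=> x_lt Exy u /=; rewrite !orbF => le_u lt_u.
by exists x, y; rewrite !inE !eqxx orbT; split => //; lia.
Qed.

Lemma irreducible_set_fill (S T : seq nat) : irreducible_set E S ->
  {in T, forall t, has (fun s => s <= t) S && has (fun s => t <= s) S} ->
  irreducible_set E (S ++ T).
Proof.
move=> irrS inside u; rewrite !has_cat.
have lower : has (fun t => t <= u) T -> has (fun s => s <= u) S.
  case/hasP=> t /inside /andP [/hasP [s s_in s_le] _] t_le.
  by apply/hasP; exists s => //; apply: leq_trans t_le.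
have upper : has (fun t => u < t) T -> has (fun w => u < w) S.
  case/hasP=> t /inside /andP [_ /hasP [s s_in s_ge]] t_gt.
  by apply/hasP; exists s => //; apply: leq_trans s_ge.
move=> /orP [|/lower] le_u /orP [|/upper] lt_u;
  have [x [y [x_in y_in x_le lt_y Exy]]] := irrS u le_u lt_u;
  by exists x, y; rewrite !mem_cat x_in y_in.
Qed.

Lemma irreducible_set_cat (S T : seq nat) (z : nat) : z \in S -> z \in T ->
  irreducible_set E S -> irreducible_set E T -> irreducible_set E (S ++ T).
Proof.
move=> zS zT irrS irrT u; rewrite !has_cat => le_u lt_u.
have [/andP [leS ltS] | notS] := boolP (has (fun s => s <= u) S && has (fun w => u < w) S).
  have [x [y [x_in y_in x_le lt_y Exy]]] := irrS u leS ltS.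
  by exists x, y; rewrite !mem_cat x_in y_in.
have [/andP [leT ltT] | notT] := boolP (has (fun s => s <= u) T && has (fun w => u < w) T).
  have [x [y [x_in y_in x_le lt_y Exy]]] := irrT u leT ltT.
  by exists x, y; rewrite !mem_cat x_in y_in !orbT.
have [z_le | z_gt] := leqP z u.
  have leS : has (fun s => s <= u) S by apply/hasP; exists z.
  have leT : has (fun s => s <= u) T by apply/hasP; exists z.
  by move: notS notT lt_u; rewrite leS leT /= => /negbTE -> /negbTE ->.
have gtS : has (fun w => u < w) S by apply/hasP; exists z.
have gtT : has (fun w => u < w) T by apply/hasP; exists z.
by move: notS notT le_u; rewrite gtS gtT !andbT => /negbTE -> /negbTE ->.
Qed.

Lemma irreducible_set_crossed (P : seq nat) : sorted ltn P ->
  irreducible_set E P -> forall q, 0 < q < size P -> crossed E P q.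
Proof.
move=> P_sorted irrP q /andP [q_gt0 q_lt].
have q'_lt : q.-1 < size P by lia.
set u := nth 0 P q.-1.
have le_u : has (fun s => s <= u) P by apply/hasP; exists u; rewrite ?mem_nth.
have lt_u : has (fun w => u < w) P.
  apply/hasP; exists (nth 0 P q); first exact: mem_nth.
  by apply: (sorted_ltn_nth ltn_trans) => //; lia.
have [x [y [x_in y_in x_le lt_y Exy]]] := irrP u le_u lt_u.
move: x_le lt_y; rewrite -(nth_index 0 x_in) -(nth_index 0 y_in) /u.
rewrite ltnNge !ltn_sorted_leq_nth ?index_mem // => x_le y_gt.
by exists (index x P), (index y P); rewrite !nth_index ?index_mem //; split => //; lia.
Qed.

End IrreducibleSets.

Section Crossings.

Variable E : rel nat.

Lemma crossed_catl (P Q : seq nat) (p : nat) : crossed E P p -> crossed E (P ++ Q) p.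
Proof.
move=> [i [j [i_lt j_ge j_lt Eij]]]; exists i, j.
by rewrite size_cat !nth_cat j_lt (ltn_trans _ j_lt) 1?(leq_trans i_lt) //; split => //; lia.
Qed.

Lemma crossed_catr (P Q : seq nat) (p : nat) :
  crossed E Q p -> crossed E (P ++ Q) (size P + p).
Proof.
move=> [i [j [i_lt j_ge j_lt Eij]]]; exists (size P + i), (size P + j).
by rewrite size_cat !nth_cat !ltnNge !leq_addr /= !addKn; split => //; lia.
Qed.

Lemma crossed_cat_inv (P Q : seq nat) (p : nat) :
  {in P & Q, forall x y, ~~ E x y} -> size P <= p ->
  crossed E (P ++ Q) p -> crossed E Q (p - size P).
Proof.
move=> sep p_ge [i [j [i_lt j_ge j_lt]]]; rewrite size_cat in j_lt.
have j_ge' : size P <= j by lia.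
rewrite !nth_cat (ltnNge j) j_ge' /=.
have [i_ltP | i_geP] := ltnP i (size P).
  have j_ltQ : j - size P < size Q by lia.
  by rewrite (negbTE (sep _ _ (mem_nth 0 i_ltP) (mem_nth 0 j_ltQ))).
by move=> Eij; exists (i - size P), (j - size P); split => //; lia.
Qed.

Lemma crossed0 (Q : seq nat) : ~ crossed E Q 0.
Proof. by move=> [i [j []]]. Qed.

End Crossings.

(* A growth step keeps these bounds on the hull [lo, hi] because edges are
   shorter than [l]. *)
Definition anchored_piece (E : rel nat) (l p : nat) (S : seq nat) (lo hi : nat) : Prop :=
  [/\ uniq S, irreducible_set E S, lo \in S, hi \in S &
      [/\ {in S, forall z, lo <= z <= hi}, lo <= p <= hi, p < lo + l &
          hi.+1 < p + size S + l]].

Section Pieces.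

Variables (E : rel nat) (l : nat).
Hypothesis short : l_empty l E.

Lemma anchored_piece_fill (p : nat) (S : seq nat) (lo hi z : nat) :
  anchored_piece E l p S lo hi -> lo <= z <= hi -> z \notin S ->
  anchored_piece E l p (z :: S) lo hi.
Proof.
move=> [S_uniq irrS lo_in hi_in [S_hull p_in p_lt hi_lt]] z_in z_notin.
split; rewrite /= ?z_notin ?inE ?lo_in ?hi_in ?orbT //.
  apply: (@eq_irreducible_set _ (S ++ [:: z])) => [w|]; first by rewrite mem_cat inE orbC.
  by apply: irreducible_set_fill => // _ /[!inE] /eqP ->; apply/andP; split; apply/hasP;
    [exists lo | exists hi] => //; lia.
by split => [w /[!inE] /orP [/eqP -> | /S_hull] | | |]; lia.
Qed.

Lemma anchored_piece_extend (p : nat) (S : seq nat) (lo hi x y : nat) :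
  anchored_piece E l p S lo hi -> hi < lo + size S ->
  x \in S -> hi < y -> E x y -> anchored_piece E l p (y :: S) lo y.
Proof.
move=> [S_uniq irrS lo_in hi_in [S_hull p_in p_lt hi_lt]] hi_gapless x_in y_gt Exy.
have x_le := S_hull x x_in.
have xy_short := short Exy ltac:(lia).
have y_notin : y \notin S by apply/negP => /S_hull; lia.
split; rewrite /= ?y_notin ?inE ?lo_in ?eqxx ?orbT //.
  apply: (@eq_irreducible_set _ ([:: x; y] ++ S)) => [w|].
    by rewrite mem_cat !inE; case: eqP => [-> | _]; rewrite ?x_in ?orbT.
  apply: (irreducible_set_cat (z := x)) (mem_head _ _) x_in _ irrS.
  by apply: irreducible_set_edge; lia.
by split => [w /[!inE] /orP [/eqP -> | /S_hull] | | |]; lia.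
Qed.

Lemma anchored_piece_replace (p : nat) (S : seq nat) (lo hi x y : nat) :
  anchored_piece E l p S lo hi -> x < lo -> hi < y -> E x y ->
  anchored_piece E l p [:: x, y & rem lo S] x y.
Proof.
move=> [S_uniq irrS lo_in hi_in [S_hull p_in p_lt hi_lt]] x_lt y_gt Exy.
have xy_short := short Exy ltac:(lia).
have rem_sub : {subset rem lo S <= S} by move=> w /mem_rem.
split.
- rewrite /= rem_uniq // andbT inE negb_or -andbA; apply/and3P; split.
  + by apply/eqP; lia.
  + by apply/negP => /rem_sub /S_hull; lia.
  + by apply/negP => /rem_sub /S_hull; lia.
- apply: (@irreducible_set_fill _ [:: x; y]) => [|w /rem_sub /S_hull w_in].
    by apply: irreducible_set_edge; lia.
  by apply/andP; split; apply/hasP; [exists x | exists y]; rewrite ?inE ?eqxx ?orbT //; lia.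
- exact: mem_head.
- by rewrite !inE eqxx orbT.
- have /= size_S := perm_size (perm_to_rem lo_in).
  by split => [w /[!inE] /or3P [/eqP -> | /eqP -> | /rem_sub /S_hull] | | |]; lia.
Qed.

Lemma anchored_piece_grow (p : nat) (S : seq nat) (lo hi x y : nat) :
  anchored_piece E l p S lo hi -> x <= hi < y -> E x y ->
  exists S' lo' hi', anchored_piece E l p S' lo' hi' /\ size S' = (size S).+1.
Proof.
move=> pieceS /andP [x_le y_gt] Exy.
have [S_uniq _ lo_in hi_in [S_hull p_in _ _]] := pieceS.
have [/hasP [z z_in z_notin] | no_gap] := boolP (has (fun z => z \notin S) (iota lo (hi - lo))).
  exists (z :: S), lo, hi; split => //.
  by apply: anchored_piece_fill pieceS _ z_notin; move: z_in; rewrite mem_iota; lia.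
have hull_in : {in iota lo (hi - lo).+1, forall z, z \in S}.
  move=> z; rewrite mem_iota => z_in; apply: contraNT no_gap => z_notin.
  have [z_hi | z_lt_hi] := eqVneq z hi; first by rewrite z_hi hi_in in z_notin.
  by apply/hasP; exists z; rewrite ?mem_iota //; lia.
have hull_size : (hi - lo).+1 <= size S.
  by rewrite -(size_iota lo (hi - lo).+1) uniq_leq_size ?iota_uniq.
have [lo_le_x | x_lt_lo] := leqP lo x.
  exists (y :: S), lo, y; split => //.
  by apply: anchored_piece_extend pieceS _ (hull_in _ _) y_gt Exy; rewrite ?mem_iota; lia.
exists [:: x, y & rem lo S], x, y; split; first exact: anchored_piece_replace pieceS x_lt_lo y_gt Exy.
by rewrite /= (perm_size (perm_to_rem lo_in)).
Qed.
Variables (a0 M : nat).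
Hypothesis block_irr : irreducible_set E (iota a0 M).

Lemma anchored_piece_exists (p a : nat) : a0 <= p -> p + 2 * l <= a0 + M ->
  0 < a <= l -> exists S lo hi, anchored_piece E l p S lo hi /\ size S = a.
Proof.
move=> p_ge p_le; elim: a => [//|a IH] a_le.
have [a0_eq | a_gt0] := posnP a.
  exists [:: p], p, p; rewrite a0_eq; split => //.
  split; rewrite ?inE ?eqxx //; first exact: irreducible_set1.
  by split => /= [w /[!inE] /eqP -> | | |]; lia.
have [S [lo [hi [pieceS sizeS]]]] := IH ltac:(lia).
have [_ _ _ _ [_ p_in _ hi_lt]] := pieceS.
have le_hi : has (fun s => s <= hi) (iota a0 M) by apply/hasP; exists a0; rewrite ?mem_iota; lia.
have gt_hi : has (fun w => hi < w) (iota a0 M).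
  by apply/hasP; exists hi.+1; rewrite ?mem_iota; lia.
have [x [y [_ _ x_le y_gt Exy]]] := block_irr le_hi gt_hi.
rewrite -sizeS; apply: anchored_piece_grow pieceS _ Exy; lia.
Qed.

Lemma sorted_piece_exists (lb a : nat) : a0 <= lb -> lb + 3 * l <= a0 + M ->
  0 < a <= l -> exists P, [/\ sorted ltn P, size P = a,
    {in P, forall x, lb < x < lb + 3 * l} & forall q, 0 < q < a -> crossed E P q].
Proof.
move=> lb_ge lb_le a_range.
have [S [lo [hi [[S_uniq irrS _ _ [S_hull _ p_lt hi_lt]] sizeS]]]] :=
  anchored_piece_exists (p := lb + l) (leq_trans lb_ge (leq_addr _ _)) ltac:(lia) a_range.
have P_sorted : sorted ltn (sort leq S).
  by rewrite ltn_sorted_uniq_leq sort_uniq S_uniq (sort_sorted leq_total).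
exists (sort leq S); split => //.
- by rewrite size_sort.
- by move=> x; rewrite mem_sort => /S_hull; lia.
- move=> q; rewrite -sizeS -(size_sort leq); apply: irreducible_set_crossed => //.
  by apply: eq_irreducible_set irrS => z; rewrite mem_sort.
Qed.

Lemma cut_pattern_exists (c : seq nat) (lb : nat) :
  all (fun a => 0 < a <= l) c -> a0 <= lb -> lb + 4 * l * size c <= a0 + M ->
  exists s, [/\ sorted ltn s, size s = sumn c,
    {in s, forall x, lb < x < lb + 4 * l * size c} &
    forall p, 0 < p <= sumn c -> crossed E s p <-> p \notin psums c].
Proof.
elim: c lb => [|a c IH] lb.
  by exists [::]; split => // p /andP [p_gt0]; rewrite /= leqNgt p_gt0.
rewrite /= mulnS => /andP [a_range c_range] lb_ge lb_le.
have [P [P_sorted P_size P_range P_cross]] := sorted_piece_exists lb_ge ltac:(lia) a_range.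
have [s [s_sorted s_size s_range s_cross]] := IH (lb + 4 * l) c_range ltac:(lia) ltac:(lia).
have sep : {in P & s, forall x y, ~~ E x y}.
  move=> x y /P_range x_in /s_range y_in; apply/negP => /short; lia.
exists (P ++ s); split.
- rewrite (sorted_pairwise ltn_trans) pairwise_cat -!(sorted_pairwise ltn_trans).
  rewrite P_sorted s_sorted !andbT; apply/allrelP => x y /P_range ? /s_range ?; lia.
- by rewrite size_cat P_size s_size.
- by move=> x; rewrite mem_cat => /orP [/P_range | /s_range]; lia.
move=> p p_range; rewrite mem_psums_cons.
have [p_lt | p_ge] := ltnP p a.
  rewrite (ltn_eqF p_lt) /=; split=> // _.
  by apply: crossed_catl; apply: P_cross; lia.
have [-> | p_neq] := eqVneq p a.
  split=> // /(crossed_cat_inv sep); rewrite P_size leqnn subnn.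
  by move=> /(_ isT) /crossed0.
rewrite -s_cross /=; last by lia.
split; first by move/(crossed_cat_inv sep); rewrite P_size; apply.
by move/(crossed_catr P); rewrite P_size subnKC.
Qed.

End Pieces.

Lemma block_irreducible_set (E : rel nat) (a m : nat) :
  irreducible m (block E a m) -> irreducible_set E (iota a m).
Proof.
move=> irr u /hasP [s s_in s_le] /hasP [w w_in w_gt].
move: s_in w_in; rewrite !mem_iota => s_in w_in.
apply: NNPP => no_edge; apply: irr; exists (u - a), (u - a).+1; split => [||i j ij]; try lia.
case/and3P=> i_lt j_lt Eij; apply/negPn/negP; rewrite negb_or -!ltnNge => /andP [? ?].
by apply: no_edge; exists (a + i), (a + j); rewrite !mem_iota; split => //; lia.
Qed.

Lemma block_end_le_sumn (ns : seq nat) (t : nat) : t < size ns ->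
  block_start ns t + nth 0 ns t <= sumn ns.
Proof.
move=> t_lt; rewrite /block_start -sumn_rcons -take_nth //.
by rewrite -{2}(cat_take_drop t.+1 ns) sumn_cat leq_addr.
Qed.

Section InducedSubgraphs.

Variables (N : nat) (s : seq nat).
Hypotheses (s_sorted : sorted ltn s) (s_lt : {in s, forall x, x < N}).

Let A : {set 'I_N} := [set x : 'I_N | val x \in s].

Lemma sort_enum_seq_set : sort leq [seq val x | x <- enum A] = s.
Proof.
apply: (irr_sorted_eq ltn_trans ltnn) => //.
  rewrite ltn_sorted_uniq_leq sort_uniq (sort_sorted leq_total) andbT.
  by rewrite map_inj_uniq ?enum_uniq //; apply: val_inj.
move=> z; rewrite mem_sort; apply/mapP/idP => [[x] | z_in].
  by rewrite mem_enum inE => x_in ->.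
by exists (Ordinal (s_lt z_in)); rewrite ?mem_enum ?inE.
Qed.

Lemma card_seq_set : #|A| = size s.
Proof. by rewrite -[in RHS]sort_enum_seq_set size_sort size_map cardE. Qed.

Lemma induced_seq_set (E : rel nat) :
  induced E (size s) A = [ffun q : 'I_(size s) * 'I_(size s) => E (nth 0 s q.1) (nth 0 s q.2)].
Proof. by rewrite /induced sort_enum_seq_set. Qed.

End InducedSubgraphs.

Definition crossedb (n : nat) (g : {ffun 'I_n * 'I_n -> bool}) (p : nat) : bool :=
  [exists i : 'I_n, exists j : 'I_n, (i < p <= j) && g (i, j)].

(* Position [n] is never crossed: it stands for the last partial sum. *)
Definition uncrossed_cuts (n : nat) (g : {ffun 'I_n * 'I_n -> bool}) : seq nat :=
  [seq p <- iota 1 n | ~~ crossedb g p].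

Lemma crossedb_seq (E : rel nat) (s : seq nat) (p : nat) :
  crossedb [ffun q : 'I_(size s) * 'I_(size s) => E (nth 0 s q.1) (nth 0 s q.2)] p
  <-> crossed E s p.
Proof.
split => [/existsP [i /existsP [j /andP [/andP [i_lt j_ge]]]] | [i [j [i_lt j_ge j_lt Eij]]]].
  by rewrite ffunE => Eij; exists i, j.
have i_lt' : i < size s by lia.
apply/existsP; exists (Ordinal i_lt'); apply/existsP; exists (Ordinal j_lt).
by rewrite ffunE /= i_lt j_ge.
Qed.

Lemma uncrossed_cuts_psums (E : rel nat) (s c : seq nat) :
  all (fun a => 0 < a) c -> size s = sumn c ->
  (forall p, 0 < p <= sumn c -> crossed E s p <-> p \notin psums c) ->
  uncrossed_cuts [ffun q : 'I_(size s) * 'I_(size s) => E (nth 0 s q.1) (nth 0 s q.2)]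
  = psums c.
Proof.
move=> c_pos s_size s_cross.
apply: (irr_sorted_eq ltn_trans ltnn); [|exact: sorted_psums|].
  by apply: sorted_filter; [exact: ltn_trans | exact: iota_ltn_sorted].
move=> p; rewrite mem_filter mem_iota add1n ltnS.
have [p_range | p_out] := boolP (0 < p <= size s).
  rewrite s_size in p_range; rewrite andbT; apply/idP/idP => [/negP uncrossed | p_in].
    by apply: contraT => /(s_cross _ p_range) /crossedb_seq.
  by apply/negP => /crossedb_seq /(s_cross _ p_range); rewrite p_in.
rewrite andbF; apply/esym/negP => /(mem_psums c_pos).
by rewrite -s_size; apply/negP.
Qed.

Theorem lemma16 (k l N : nat) (E : rel nat) :
  ordered_graph N E -> l_empty l E ->
  (exists ns, irr_block_decomp N E ns /\ has (fun m => 4 * k * l <= m) ns) ->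
  forall n, n <= k -> F n l <= S_n n N E.
Proof.
move=> _ short [ns [[_ sum_ns _ irr_blocks] has_big]] n n_le.
have [t t_lt big_block] := has_nthP 0 has_big.
have block_le := block_end_le_sumn t_lt; rewrite sum_ns in block_le.
have block_irr := block_irreducible_set (irr_blocks t t_lt).
rewrite -size_compositions /S_n cardE -(size_map psums) -(size_map (@uncrossed_cuts n)).
apply: uniq_leq_size => [|_ /mapP [c c_in ->]].
  by rewrite map_inj_uniq ?uniq_compositions //; exact: psums_inj.
have [c_sum c_parts] := compositionsP c_in.
have c_pos : all (fun a => 0 < a) c by apply: sub_all c_parts => a /andP [].
have size_c := size_le_sumn c_pos.
have [s [s_sorted s_size s_range s_cross]] :=
  cut_pattern_exists short block_irr c_parts (leqnn _) ltac:(nia).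
have s_lt : {in s, forall x, x < N} by move=> x /s_range; nia.
apply/mapP; exists (induced E n [set x : 'I_N | val x \in s]).
  rewrite mem_enum; apply/imsetP; exists [set x : 'I_N | val x \in s] => //.
  by rewrite inE (card_seq_set s_sorted s_lt) s_size c_sum.
by rewrite -c_sum -s_size (induced_seq_set s_sorted s_lt) (uncrossed_cuts_psums c_pos).
Qed.
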